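(* Let $G$ be a mean-payoff game with partial-observation and $G'$ its limited-observation counterpart (defined below). Eve has a winning observation-based strategy in $G$ if and only if she has a winning observation-based strategy in $G'$.
   Context: An MPG with partial-observation is a tuple $G=\langle Q,q_I,\Sigma,\Delta,w,Obs\rangle$: $Q$ finite set of states, $q_I\in Q$, $\Sigma$ finite set of actions, $\Delta\subseteq Q\times\Sigma\times Q$ total, $w:\Delta\to\mathbb{Z}$, $Obs$ a partition of $Q$. $\mathrm{post}_\sigma(s)=\{q':\exists q\in s,(q,\sigma,q')\in\Delta\}$. Plays are infinite abstract paths $o_0\sigma_0o_1\ldots$ ($o_i\in Obs$, with some $\sigma_i$-transition from a state of $o_i$ to a state of $o_{i+1}$) starting at the observation containing the initial state; $\gamma(\psi)$ is the set of concrete paths $q_0\sigma_0q_1\ldots$ with $q_i\in o_i$ and $(q_i,\sigma_i,q_{i+1})\in\Delta$; $\underline{MP}(\pi)=\liminf_n\frac1n\sum_{i<n}w(q_i,\sigma_i,q_{i+1})$. An observation-based strategy for Eve maps finite play prefixes ending in an observation to actions; a play $o_0\sigma_0\ldots$ is consistent with $\lambda$ if $\sigma_i=\lambda(o_0\sigma_0\ldots o_i)$; $\lambda$ is winning if every consistent play $\psi$ satisfies $\underline{MP}(\pi)\ge0$ for all $\pi\in\gamma(\psi)$. The limited-observation counterpart of $G$ is $G'=\langle Q',q'_I,\Sigma,\Delta',w',Obs'\rangle$ with $Q'=\{(q,K)\in Q\times2^Q: q\in K,\ K\subseteq o\text{ for some }o\in Obs\}$, $q'_I=(q_I,\{q_I\})$,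 $Obs'=\{\{(q,K):q\in K\}: \emptyset\ne K\subseteq o\text{ for some }o\in Obs\}$, $\Delta'$ consisting of the triples $((q,K),\sigma,(q',K'))$ with $(q,\sigma,q')\in\Delta$ and $K'=\mathrm{post}_\sigma(K)\cap o$ for some $o\in Obs$, and $w'((q,K),\sigma,(q',K'))=w(q,\sigma,q')$. *)

From HB Require Import structures.
From mathcomp Require Import all_boot all_order all_algebra.
From mathcomp Require boolp classical_sets reals topology sequences
  Rstruct Rstruct_topology.
From mathcomp Require Import constructive_ereal Rstruct.
Set Implicit Arguments. Unset Strict Implicit. Unset Printing Implicit Defensive.
Import Order.TTheory GRing.Theory Num.Theory.
Local Open Scope ring_scope.

(* A mean-payoff game with partial observation is given by
   states Q, actions Sig (finite types), initial state qI,
   transition relation delta (as a boolean predicate on Q x Sig x Q),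
   weights w (only relevant on delta) and a family of observations Obs. *)

Section MPG.
Variables (Q Sig : finType) (qI : Q) (delta : Q -> Sig -> Q -> bool)
  (w : Q -> Sig -> Q -> int) (Obs : {set {set Q}}).

Definition total_rel : Prop := forall q s, exists q', delta q s q'.

Definition obs_partition : Prop := partition Obs [set: Q].

Definition post (s : Sig) (K : {set Q}) : {set Q} :=
  [set q' | [exists q in K, delta q s q']].

Definition init_obs : {set Q} := pblock Obs qI.

Definition is_play (o : nat -> {set Q}) (s : nat -> Sig) : Prop :=
  o 0%N = init_obs /\
  forall i, o i \in Obs /\
    exists q q', [/\ q \in o i, q' \in o i.+1 & delta q (s i) q'].

(* observation-based strategies: a finite prefix o_0 s_0 ... o_{i-1} s_{i-1} o_i
   is represented as the list of pairs (o_j, s_j), j < i, and the last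
   observation o_i *)
Definition strategy := seq ({set Q} * Sig) -> {set Q} -> Sig.

Definition prefix (o : nat -> {set Q}) (s : nat -> Sig) (i : nat) :=
  [seq (o j, s j) | j <- iota 0 i].

Definition consistent (lam : strategy) (o : nat -> {set Q}) (s : nat -> Sig) :=
  forall i, s i = lam (prefix o s i) (o i).

Definition concrete (o : nat -> {set Q}) (s : nat -> Sig) (q : nat -> Q) : Prop :=
  q 0%N = qI /\ forall i, q i \in o i /\ delta (q i) (s i) (q i.+1).

Definition lower_MP (s : nat -> Sig) (q : nat -> Q) : \bar Rdefinitions.R :=
  sequences.limn_einf (fun n : nat =>
    (((\sum_(i < n) w (q i) (s i) (q i.+1))%:~R / n%:R : Rdefinitions.R)%:E)).

Definition winning (lam : strategy) : Prop :=
  forall o s, is_play o s -> consistent lam o s ->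
  forall q, concrete o s q -> (0 <= lower_MP s q)%E.

Definition eve_wins : Prop := exists lam : strategy, winning lam.

End MPG.

Section Limited.
Variables (Q Sig : finType) (qI : Q) (delta : Q -> Sig -> Q -> bool)
  (w : Q -> Sig -> Q -> int) (Obs : {set {set Q}}).

Definition lstate_pred (x : Q * {set Q}) : bool :=
  (x.1 \in x.2) && [exists o in Obs, x.2 \subset o].

Definition LState : finType := {x : Q * {set Q} | lstate_pred x}.

Lemma init_lstate_ok : obs_partition Obs -> lstate_pred (qI, [set qI]).
Proof.
move=> /and3P [/eqP Hcov _ _].
have Hq : qI \in cover Obs by rewrite Hcov inE.
rewrite /lstate_pred /= set11 /=; apply/existsP; exists (pblock Obs qI).
by rewrite pblock_mem //= sub1set mem_pblock.
Qed.

Definition L_init (HP : obs_partition Obs) : LState :=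
  exist _ (qI, [set qI]) (init_lstate_ok HP).

Definition L_Obs : {set {set LState}} :=
  [set [set x : LState | (val x).2 == K] | K in
     [set K : {set Q} | (K != set0) && [exists o in Obs, K \subset o]]].

Definition L_delta (x : LState) (s : Sig) (y : LState) : bool :=
  delta (val x).1 s (val y).1 &&
  [exists o in Obs, (val y).2 == post delta s (val x).2 :&: o].

Definition L_w (x : LState) (s : Sig) (y : LState) : int :=
  w (val x).1 s (val y).1.

End Limited.

From Pilot Require Import Defs.
From mathcomp Require Import all_boot all_order all_algebra.
Set Implicit Arguments. Unset Strict Implicit. Unset Printing Implicit Defensive.

(** A state [(q, K)] of the counterpart pairs the true state [q] with Eve's
  knowledge [K], the set of states compatible with the history so far.  As
  [K] is a function of the history, a strategy for [G] can recompute the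
  knowledge along its own history and consult a strategy for [G']; conversely,
  a strategy for [G'] can project every observation of [G'] onto the
  observation of [G] containing its states.  In both directions the first
  components of the concrete paths of one game are concrete paths of the
  other carrying the same weights, so winning transfers. *)

Section LimitedObservation.
Variables (Q Sig : finType) (qI : Q) (delta : Q -> Sig -> Q -> bool)
  (w : Q -> Sig -> Q -> int) (Obs : {set {set Q}}).
Hypothesis HP : obs_partition Obs.

Local Notation LS := (LState Obs).
Local Notation Linit := (L_init qI HP).
Local Notation Ldelta := (L_delta delta (Obs:=Obs)).
Local Notation LObs := (L_Obs Obs).

Lemma cover_Obs : cover Obs = [set: Q].
Proof. by case/and3P: HP => /eqP. Qed.

Lemma pblock_Obs_mem q : pblock Obs q \in Obs.
Proof. by rewrite pblock_mem // cover_Obs inE. Qed.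

Lemma mem_pblock_Obs q : q \in pblock Obs q.
Proof. by rewrite mem_pblock cover_Obs inE. Qed.

Lemma lstate_fst_mem (x : LS) : (val x).1 \in (val x).2.
Proof. by case/andP: (valP x). Qed.

Lemma lower_MP_L s (x : nat -> LS) :
  lower_MP (L_w w (Obs:=Obs)) s x = lower_MP w s (fun i => (val (x i)).1).
Proof. by []. Qed.

Definition lobs (K : {set Q}) : {set LS} := [set x : LS | (val x).2 == K].

Lemma lobs_val_mem (x : LS) : lobs (val x).2 \in LObs.
Proof.
apply/imsetP; exists (val x).2 => //; rewrite inE; case/andP: (valP x) => xK ->.
by rewrite andbT; apply/set0Pn; exists (val x).1.
Qed.

Lemma pblock_LObs (x : LS) : pblock LObs x = lobs (val x).2.
Proof.
rewrite /pblock; case: pickP => [B /andP[/imsetP[K _ ->] xB] | noB].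
  by rewrite inE in xB; rewrite (eqP xB).
have /negP[] := negbT (noB (lobs (val x).2)).
by apply/andP; split; [exact: lobs_val_mem | rewrite inE].
Qed.

Definition proj_obs (O' : {set LS}) : {set Q} :=
  if [pick x in O'] is Some x then pblock Obs (val x).1 else set0.

Lemma proj_obsE O' x : O' \in LObs -> x \in O' -> proj_obs O' = pblock Obs (val x).1.
Proof.
case/imsetP=> K; rewrite inE => /andP[_ /existsP[o /andP[Ho sKo]]] ->.
have blockE (y : LS) : y \in lobs K -> pblock Obs (val y).1 = o.
  rewrite inE => /eqP yK; apply: def_pblock Ho _; first by case/and3P: HP.
  by apply: (subsetP sKo); rewrite -yK lstate_fst_mem.
by move=> xK; rewrite /proj_obs; case: pickP => [y yK | /(_ x)]; rewrite ?blockE ?xK.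
Qed.

Definition proj_strategy (lam : strategy Q Sig) : strategy LS Sig :=
  fun l O' => lam [seq (proj_obs p.1, p.2) | p <- l] (proj_obs O').

Lemma proj_strategy_consistent lam O' s o :
  consistent (proj_strategy lam) O' s -> (forall i, proj_obs (O' i) = o i) ->
  consistent lam o s.
Proof.
move=> cons oE i; rewrite cons /proj_strategy oE /Defs.prefix.
by congr lam; elim: (iota 0 i) => //= j js ->; rewrite oE.
Qed.

Lemma L_concrete_fst O' s (x : nat -> LS) : concrete Linit Ldelta O' s x ->
  (val (x 0%N)).1 = qI /\ forall i, delta (val (x i)).1 (s i) (val (x i.+1)).1.
Proof. by case=> -> conc; split=> // i; case/andP: (conc i).2. Qed.

Section PathOfG.
Variables (s : nat -> Sig) (q : nat -> Q).
Hypotheses (q0 : q 0%N = qI) (q_delta : forall i, delta (q i) (s i) (q i.+1)).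

Lemma is_play_pblock : is_play qI delta Obs (fun i => pblock Obs (q i)) s.
Proof.
split=> [|i]; first by rewrite q0.
split; first exact: pblock_Obs_mem.
by exists (q i), (q i.+1); rewrite !mem_pblock_Obs q_delta.
Qed.

Lemma concrete_pblock : concrete qI delta (fun i => pblock Obs (q i)) s q.
Proof. by split=> // i; rewrite mem_pblock_Obs q_delta. Qed.

End PathOfG.

Fixpoint knowledge (o : nat -> {set Q}) (s : nat -> Sig) n : {set Q} :=
  if n is m.+1 then post delta (s m) (knowledge o s m) :&: o n else [set qI].

Lemma eq_knowledge o o' s s' n :
  (forall j, j <= n -> o j = o' j) -> (forall j, j < n -> s j = s' j) ->
  forall j, j <= n -> knowledge o s j = knowledge o' s' j.
Proof.
move=> oE sE; elim=> [//|j IH] le_jn /=.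
by rewrite IH ?(ltnW le_jn) // sE // oE.
Qed.

(** The default [s0] of [nth] is irrelevant: only indices below [size l] are
  read from the actions of [l]. *)
Definition knowledge_strategy (s0 : Sig) (lam' : strategy LS Sig) : strategy Q Sig :=
  fun l oc =>
    let o j := nth oc (unzip1 l) j in
    let s j := nth s0 (unzip2 l) j in
    lam' (Defs.prefix (fun j => lobs (knowledge o s j)) s (size l))
         (lobs (knowledge o s (size l))).

Lemma nth_prefix_obs (o : nat -> {set Q}) (s : nat -> Sig) i j :
  j <= i -> nth (o i) (unzip1 (Defs.prefix o s i)) j = o j.
Proof.
rewrite leq_eqVlt => /predU1P[-> | lt_ji].
  by rewrite nth_default // !size_map size_iota.
by rewrite /unzip1 /Defs.prefix -map_comp (nth_map 0) ?size_iota //= nth_iota.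
Qed.

Lemma nth_prefix_act (o : nat -> {set Q}) (s : nat -> Sig) i s0 j :
  j < i -> nth s0 (unzip2 (Defs.prefix o s i)) j = s j.
Proof.
by move=> lt_ji; rewrite /unzip2 /Defs.prefix -map_comp (nth_map 0) ?size_iota //= nth_iota.
Qed.

Lemma knowledge_strategy_prefix s0 lam' o s i :
  knowledge_strategy s0 lam' (Defs.prefix o s i) (o i) =
  lam' (Defs.prefix (fun j => lobs (knowledge o s j)) s i) (lobs (knowledge o s i)).
Proof.
rewrite /knowledge_strategy !size_map size_iota.
have sE j : j < i -> nth s0 (unzip2 (Defs.prefix o s i)) j = s j.
  exact: nth_prefix_act.
have KE := eq_knowledge (@nth_prefix_obs o s i) sE.
congr lam'; last by rewrite KE.
apply/eq_in_map => j; rewrite mem_iota => /andP[_ lt_ji].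
by rewrite KE ?sE // ltnW.
Qed.

Lemma knowledge_strategy_consistent s0 lam' o s :
  consistent (knowledge_strategy s0 lam') o s ->
  consistent lam' (fun i => lobs (knowledge o s i)) s.
Proof. by move=> cons i; rewrite cons knowledge_strategy_prefix. Qed.

Section KnowledgeAlongPlay.
Variables (o : nat -> {set Q}) (s : nat -> Sig) (q : nat -> Q).
Hypotheses (play : is_play qI delta Obs o s) (conc : concrete qI delta o s q).

Lemma mem_knowledge i : q i \in knowledge o s i.
Proof.
case: conc => q0 q_step; elim: i => [|i IH] /=; first by rewrite q0 inE.
rewrite inE (q_step i.+1).1 andbT inE; apply/existsP; exists (q i).
by rewrite IH (q_step i).2.
Qed.

Lemma knowledge_sub i : knowledge o s i \subset o i.
Proof.
case: i => [|i] /=; last exact: subsetIr.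
by rewrite play.1 sub1set mem_pblock_Obs.
Qed.

Lemma lstate_knowledge i : lstate_pred Obs (q i, knowledge o s i).
Proof.
rewrite /lstate_pred /= mem_knowledge; apply/existsP; exists (o i).
by rewrite (play.2 i).1 knowledge_sub.
Qed.

Definition lift_path i : LS := exist (lstate_pred Obs) _ (lstate_knowledge i).

Lemma lift_play_concrete :
  is_play Linit Ldelta LObs (fun i => lobs (knowledge o s i)) s /\
  concrete Linit Ldelta (fun i => lobs (knowledge o s i)) s lift_path.
Proof.
have x0 : lift_path 0 = Linit by apply: val_inj; rewrite /= conc.1.
have x_step i : Ldelta (lift_path i) (s i) (lift_path i.+1).
  rewrite /L_delta /= (conc.2 i).2; apply/existsP; exists (o i.+1).
  by rewrite (play.2 i.+1).1 eqxx.
have x_mem i : lift_path i \in lobs (knowledge o s i) by rewrite inE.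
split; last by split=> // i; rewrite x_mem x_step.
split=> [|i]; first by rewrite /init_obs -x0 pblock_LObs.
split; first exact: (lobs_val_mem (lift_path i)).
by exists (lift_path i), (lift_path i.+1); rewrite !x_mem x_step.
Qed.

End KnowledgeAlongPlay.

End LimitedObservation.

Theorem theorem13 (Q Sig : finType) (qI : Q) (delta : Q -> Sig -> Q -> bool)
  (w : Q -> Sig -> Q -> int) (Obs : {set {set Q}})
  (Htot : total_rel delta) (HP : obs_partition Obs) :
  @eve_wins Q Sig qI delta w Obs <->
  @eve_wins (LState Obs) Sig (@L_init Q qI Obs HP)
    (@L_delta Q Sig delta Obs) (@L_w Q Sig w Obs) (@L_Obs Q Obs).
Proof.
split=> [[lam win] | [lam' win']].
- exists (proj_strategy lam) => O' s [_ Lplay] cons x conc.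
  have [q0 q_delta] := L_concrete_fst conc.
  rewrite lower_MP_L; apply: win _ _ (is_play_pblock HP q0 q_delta) _ _
    (concrete_pblock HP q0 q_delta).
  apply: proj_strategy_consistent cons _ => i.
  exact: proj_obsE (Lplay i).1 (conc.2 i).1.
- exists (knowledge_strategy qI delta (lam' [::] set0) lam') => o s play cons q conc.
  have [Lplay Lconc] := lift_play_concrete HP play conc.
  exact: win' _ _ Lplay (knowledge_strategy_consistent cons) _ Lconc.
Qed.
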